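(* Let $\mathcal{N}$ be a Beeping Network with $n$ nodes and maximum degree $\Delta$, where each node has a unique ID from $[1,n^c]$ for a constant $c\ge1$ and each node knows $n$, $c$ and $\Delta$. Then the Maximal Independent Set problem can be solved deterministically on $\mathcal{N}$ in $O(\Delta^2\,\mathrm{polylog}\, n)$ beeping rounds.
   Context: A Beeping Network is a network of $n$ nodes whose topology is an undirected graph $G=(V,E)$. Time is divided into synchronous rounds and all nodes start simultaneously. In each round every node either beeps or listens; a listening node hears ''silence'' if no neighbor beeps and ''noise'' if at least one neighbor beeps, and cannot distinguish one beep from several. An independent set is $S\subseteq V$ with no edge between any two of its nodes; it is maximal if it is not contained in a larger independent set. The Maximal Independent Set problem is solved when, for some maximal independent set $S$, every node of $S$ knows that it is in $S$. *)

From mathcomp Require Import all_boot all_order.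
Set Implicit Arguments. Unset Strict Implicit. Unset Printing Implicit Defensive.

(* A simple graph on the n nodes 'I_n: symmetric irreflexive relation. *)
Definition max_degree n (adj : rel 'I_n) : nat :=
  \max_(v : 'I_n) #|[set u | adj v u]|.

Definition independent n (adj : rel 'I_n) (S : {set 'I_n}) : Prop :=
  forall u v, u \in S -> v \in S -> ~~ adj u v.

Definition is_MIS n (adj : rel 'I_n) (S : {set 'I_n}) : Prop :=
  independent adj S /\
  forall S', independent adj S' -> S \subset S' -> S' = S.

(* Every node runs the same algorithm;
   its only inputs are n, Delta (c is fixed outside), its own ID, and the
   sequence of its observations so far (true = heard noise while listening;
   false = silence, or the node beeped itself).  [b_rounds n Delta] is the
   number of rounds run; afterwards [b_out] is the node's MIS-membership
   decision. *)
Record beep_alg := BeepAlg {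
  b_rounds : nat -> nat -> nat;
  b_act : nat -> nat -> nat -> seq bool -> bool; (* true = beep *)
  b_out : nat -> nat -> nat -> seq bool -> bool
}.

Fixpoint history (A : beep_alg) n (adj : rel 'I_n) (id : 'I_n -> nat)
    (Delta : nat) (t : nat) : 'I_n -> seq bool :=
  match t with
  | 0 => fun _ => [::]
  | t'.+1 =>
      let h := history A adj id Delta t' in
      fun v => rcons (h v)
        (if b_act A n Delta (id v) (h v) then false
         else [exists u, adj v u && b_act A n Delta (id u) (h u)])
  end.

Definition output_set (A : beep_alg) n (adj : rel 'I_n) (id : 'I_n -> nat)
    (Delta : nat) : {set 'I_n} :=
  [set v | b_out A n Delta (id v) (history A adj id Delta (b_rounds A n Delta) v)].

(** The algorithm colours the graph locally and then runs the greedy MIS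
    along the colouring.  Let R = c (log n + 1), so every ID x has at most R
    bits, and let P_x be the polynomial whose coefficients are these bits,
    over a field F with |F| > Δ R.  Distinct IDs give distinct polynomials,
    which agree in fewer than R points; hence every node x has a point a
    where P_x differs from all the P_y of its neighbours, i.e. x belongs to
    the block B_(a, P_x(a)) = {y | P_y(a) = P_x(a)} and none of its
    neighbours does.  In a first phase of 2 R |F|^2 rounds every block
    beeps its members' IDs bit by bit, which lets each node detect the
    blocks that are private to it; the index of its first private block is a
    proper colouring with |F|^2 = O(Δ^2 R^2) colours.  In the second phase
    of |F|^2 rounds the colour classes take turns: a node joins the MIS and
    beeps in the round of its colour unless it has already heard a beep.
    The total is O(Δ^2 R^3) rounds. *)
From mathcomp Require Import all_boot all_algebra finfield zify.
Set Implicit Arguments. Unset Strict Implicit. Unset Printing Implicit Defensive.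
Import GRing.Theory.

Definition bit i x := odd (x %/ 2 ^ i).

Lemma bit_inj R x y : x < 2 ^ R -> y < 2 ^ R ->
  (forall i, i < R -> bit i x = bit i y) -> x = y.
Proof.
elim: R x y => [|R IH] x y.
  by rewrite expn0 !ltnS !leqn0 => /eqP -> /eqP ->.
move=> ltx lty eq_bits.
have eq_odd : odd x = odd y by have := eq_bits 0 isT; rewrite /bit expn0 !divn1.
have eq_half : x./2 = y./2.
  apply: IH; rewrite -?divn2 ?ltn_divLR -?expnSr // => i ltiR.
  by have := eq_bits i.+1 ltiR; rewrite /bit !expnS !divnMA !divn2.
by rewrite -(odd_double_half x) -(odd_double_half y) eq_odd eq_half.
Qed.

Lemma bit_neq R x y : x < 2 ^ R -> y < 2 ^ R -> x != y ->
  exists2 i, i < R & bit i x != bit i y.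
Proof.
move=> ltx lty neq_xy.
have [/existsP [i neq_bit] | /existsPn eq_bits] :=
  boolP [exists i : 'I_R, bit i x != bit i y]; first by exists i.
case/eqP: neq_xy; apply: (bit_inj ltx lty) => i ltiR.
by apply/eqP/negPn; exact: eq_bits (Ordinal ltiR).
Qed.

Section BitPoly.
Variable F : nzRingType.
Local Open Scope ring_scope.

Definition bitpoly R x : {poly F} := \poly_(i < R) (bit i x)%:R.

Lemma bitpoly_inj R x y : (x < 2 ^ R)%N -> (y < 2 ^ R)%N ->
  bitpoly R x = bitpoly R y -> x = y.
Proof.
move=> ltx lty eq_p; apply: (bit_inj ltx lty) => i ltiR.
have := congr1 (fun p : {poly F} => p`_i) eq_p; rewrite /= !coef_poly ltiR.
by case: (bit i x) (bit i y) => [] [] //= /eqP; rewrite ?oner_eq0 // eq_sym oner_eq0.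
Qed.

End BitPoly.

Section SeparatingPoint.
Variable F : finIdomainType.
Local Open Scope ring_scope.

Lemma exists_nonroot (p : {poly F}) : p != 0 -> (size p <= #|F|)%N ->
  exists a, ~~ root p a.
Proof.
move=> nz_p le_pF; apply/existsP; apply: contraTT le_pF => /existsPn all_roots.
rewrite -ltnNge cardE; apply: max_poly_roots nz_p _ (enum_uniq _).
by apply/allP => a _; have := all_roots a; rewrite negbK.
Qed.

(* Take a non-root of the nonzero polynomial \prod_(i in A) (q i - p), whose
   size is at most #|A| R + 1. *)
Lemma exists_separating_point (I : finType) (A : {pred I}) (q : I -> {poly F})
    (p : {poly F}) R :
  (size p <= R)%N -> (forall i, i \in A -> size (q i) <= R)%N ->
  (forall i, i \in A -> q i != p) -> (#|A| * R < #|F|)%N ->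
  exists a, forall i, i \in A -> (q i).[a] != p.[a].
Proof.
move=> szp szq neq_qp ltAF.
have nz_diff i : i \in A -> q i - p != 0 by rewrite subr_eq0; exact: neq_qp.
pose d := \prod_(i in A) (q i - p).
have nz_d : d != 0 by apply/prodf_neq0.
have sz_d : (size d <= #|F|)%N.
  rewrite size_prod //; apply: leq_trans (leq_subr _ _) _.
  rewrite (leq_ltn_trans _ ltAF) // -sum_nat_const; apply: leq_sum => i Ai.
  by apply: leq_trans (size_polyD _ _) _; rewrite size_polyN geq_max szq.
have [a nroot_d] := exists_nonroot nz_d sz_d.
exists a => i Ai; move: nroot_d; rewrite /root horner_prod (bigD1 i) //=.
by rewrite mulf_eq0 negb_or hornerD hornerN subr_eq0 => /andP [].
Qed.

End SeparatingPoint.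

Section History.
Variables (A : beep_alg) (n Delta : nat) (adj : rel 'I_n) (id : 'I_n -> nat).
Local Notation H t v := (history A adj id Delta t v).

Lemma size_history t v : size (H t v) = t.
Proof. by elim: t v => [|t IH] v //=; rewrite size_rcons IH. Qed.

Lemma history_take t T v : t <= T -> H t v = take t (H T v).
Proof.
elim: T => [|T IH]; first by rewrite leqn0 => /eqP ->.
rewrite leq_eqVlt => /orP [/eqP ->| ltT]; first by rewrite take_oversize ?size_history.
by rewrite /= -cats1 takel_cat ?size_history //; exact: IH.
Qed.

Lemma nth_history t T v : t < T -> nth false (H T v) t =
  (if b_act A n Delta (id v) (H t v) then false
   else [exists u, adj v u && b_act A n Delta (id u) (H t u)]).
Proof.
move=> ltT; rewrite -(nth_take false (ltnSn t)) -history_take //=.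
by rewrite nth_rcons size_history ltnn eqxx.
Qed.

End History.

Lemma dominating_independent_is_MIS n (adj : rel 'I_n) (S : {set 'I_n}) :
  independent adj S -> (forall v, v \notin S -> exists2 u, adj v u & u \in S) ->
  is_MIS adj S.
Proof.
move=> indS domS; split=> // S' indS' subSS'.
apply/eqP; rewrite eqEsubset subSS' andbT; apply/subsetP => w wS'.
apply/negPn/negP => /domS [u adj_wu uS].
by move: (indS' w u wS' (subsetP subSS' u uS)); rewrite adj_wu.
Qed.

Section Algorithm.
Variable c : nat.

Definition id_bits n := c * (trunc_log 2 n).+1.

Definition field_degree n D := (trunc_log 2 (D * id_bits n)).+1.

Definition code_field n D : finFieldType :=
  s2val (@pPrimePowerField 2 (field_degree n D) isT (ltn0Sn _)).

Definition block n D : finType := (code_field n D * code_field n D)%type.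

Definition in_block n D x (e : block n D) :=
  (bitpoly (code_field n D) (id_bits n) x).[e.1]%R == e.2.

(* In the round of probe (e, i, b) the members of block e whose i-th bit is b beep. *)
Definition probe n D : finType := (block n D * 'I_(id_bits n) * bool)%type.

Definition probe_beeps n D x (s : probe n D) :=
  let: (e, i, b) := s in in_block x e && (bit i x == b).

Definition ncolors n D := #|block n D|.

Definition coloring_rounds n D := #|probe n D|.

Definition mis_rounds n D := coloring_rounds n D + ncolors n D.

Definition private_block n D x h (e : block n D) :=
  in_block x e &&
  ~~ [exists i : 'I_(id_bits n),
        nth false h (enum_rank ((e, i, ~~ bit i x) : probe n D))].

Definition color n D x h := find (private_block x h) (enum (block n D)).

Definition covered n D j (h : seq bool) :=
  true \in take j (drop (coloring_rounds n D) h).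

(* Rounds t < coloring_rounds are the probe rounds, in the order of [enum_rank];
   round coloring_rounds + j is the turn of colour j. *)
Definition mis_act n D x h :=
  let t := size h in
  if t < coloring_rounds n D then
    [exists s : probe n D, (t == enum_rank s) && probe_beeps x s]
  else let j := t - coloring_rounds n D in
    (color n D x h == j) && ~~ covered n D j h.

Definition mis_out n D x h :=
  (color n D x h < ncolors n D) && ~~ covered n D (color n D x h) h.

Definition mis_alg := BeepAlg mis_rounds mis_act mis_out.

Lemma card_code_field n D : #|code_field n D| = 2 ^ field_degree n D.
Proof. exact: s2valP' (@pPrimePowerField 2 (field_degree n D) isT (ltn0Sn _)). Qed.

Lemma mis_rounds_bound n D : 0 < c ->
  mis_rounds n D <= 12 * c ^ 3 * D.+1 ^ 2 * (trunc_log 2 n).+1 ^ 3.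
Proof.
move=> c_gt0; set R := id_bits n.
have R_gt0 : 0 < R by rewrite muln_gt0 c_gt0.
have le_q : 2 ^ trunc_log 2 (D * R) <= D.+1 * R.
  have [->|DR_gt0] := posnP (D * R); first by rewrite trunc_log0 muln_gt0.
  by apply: leq_trans (trunc_logP (isT : 1 < 2) DR_gt0) _; rewrite leq_mul2r leqnSn orbT.
rewrite /mis_rounds /coloring_rounds /ncolors !card_prod card_ord card_bool.
rewrite card_code_field /field_degree expnS -/R.
move: le_q; set q := 2 ^ _ => le_q.
have -> : 12 * c ^ 3 * D.+1 ^ 2 * (trunc_log 2 n).+1 ^ 3 = 12 * (D.+1 * R) ^ 2 * R.
  by rewrite /R /id_bits; nia.
have le_q2 : 2 * q * (2 * q) <= 4 * (D.+1 * R) ^ 2 by nia.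
nia.
Qed.

End Algorithm.

Section Correctness.
Variables (c n D : nat) (adj : rel 'I_n) (id : 'I_n -> nat).
Hypotheses (c_gt0 : 0 < c) (adj_sym : symmetric adj) (adj_irr : irreflexive adj)
  (maxdeg : max_degree adj = D) (id_inj : injective id)
  (id_range : forall v, 1 <= id v <= n ^ c).

Local Notation H t v := (history (mis_alg c) adj id D t v).
Local Notation beeps t v := (mis_act c n D (id v) (H t v)).
Local Notation final v := (H (mis_rounds c n D) v).
Local Notation col v := (color c n D (id v) (final v)).
Local Notation T1 := (coloring_rounds c n D).
Local Notation S := (output_set (mis_alg c) adj id D).

Lemma id_lt_bits v : id v < 2 ^ id_bits c n.
Proof.
have /andP [_ le_id] := id_range v; apply: leq_ltn_trans le_id _.
by rewrite /id_bits mulnC expnM ltn_exp2r // trunc_log_ltn.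
Qed.

Lemma card_neighbors v : #|[set u | adj v u]| <= D.
Proof. by rewrite -maxdeg; exact: leq_bigmax. Qed.

Lemma beeps_probe (s : probe c n D) v : beeps (enum_rank s) v = probe_beeps (id v) s.
Proof.
rewrite /mis_act size_history ltn_ord.
apply/existsP/idP => [[s' /andP [/eqP eq_ss' beeps_s']] | beeps_s].
  by rewrite (enum_rank_inj (val_inj eq_ss')).
by exists s; rewrite eqxx.
Qed.

Lemma heard_probe (s : probe c n D) v :
  nth false (final v) (enum_rank s) =
  ~~ probe_beeps (id v) s && [exists u, adj v u && probe_beeps (id u) s].
Proof.
rewrite nth_history; last exact: leq_trans (ltn_ord _) (leq_addr _ _).
change (b_act (mis_alg c)) with (mis_act c).
by rewrite beeps_probe; under eq_existsb do rewrite beeps_probe; case: probe_beeps.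
Qed.

(* A node listens in the rounds of the probes with the opposite of its own
   bits; a neighbour in the same block has a different ID, so it beeps in one
   of them. *)
Lemma private_blockE v (e : block c n D) : private_block (id v) (final v) e =
  in_block (id v) e && ~~ [exists u, adj v u && in_block (id u) e].
Proof.
rewrite /private_block; congr (_ && ~~ _).
apply/existsP/existsP => [[i] | [u /andP [adj_vu in_u]]].
  rewrite heard_probe /= => /andP [_ /existsP [u /and3P [adj_vu in_u _]]].
  by exists u; rewrite adj_vu.
have neq_id : id u != id v.
  by rewrite (inj_eq id_inj); apply: contraTneq adj_vu => ->; rewrite adj_irr.
have [i lt_iR neq_bit] := bit_neq (id_lt_bits u) (id_lt_bits v) neq_id.
exists (Ordinal lt_iR); rewrite heard_probe /=; apply/andP; split.
  by case: (bit i (id v)); rewrite andbF.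
apply/existsP; exists u; rewrite adj_vu in_u /=.
by case: (bit i (id u)) (bit i (id v)) neq_bit => [] [].
Qed.

Lemma exists_private_block v : exists e : block c n D, private_block (id v) (final v) e.
Proof.
pose P x := bitpoly (code_field c n D) (id_bits c n) x.
have [|u _|u||a sep] := @exists_separating_point _ _ [set u | adj v u]
  (fun u => P (id u)) (P (id v)) (id_bits c n).
- exact: size_poly.
- exact: size_poly.
- rewrite inE => adj_vu; apply: contraTneq adj_vu => /bitpoly_inj eq_id.
  by rewrite (id_inj (eq_id (id_lt_bits u) (id_lt_bits v))) adj_irr.
- rewrite card_code_field; apply: leq_ltn_trans (trunc_log_ltn _ (isT : 1 < 2)).
  by rewrite leq_mul2r card_neighbors orbT.
exists (a, (P (id v)).[a]%R); rewrite private_blockE /in_block eqxx /=.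
apply/existsP => -[u /andP [adj_vu /eqP eq_a]].
by have := sep u; rewrite inE adj_vu eq_a eqxx => /(_ isT).
Qed.

Lemma private_block_adj u v (e : block c n D) : adj u v ->
  private_block (id u) (final u) e -> ~~ private_block (id v) (final v) e.
Proof.
rewrite !private_blockE => adj_uv /andP [in_u _]; rewrite negb_and negbK.
by apply/orP; right; apply/existsP; exists u; rewrite adj_sym adj_uv.
Qed.

Lemma has_private_block v : has (private_block (id v) (final v)) (enum (block c n D)).
Proof.
by have [e pe] := exists_private_block v; apply/hasP; exists e; rewrite ?mem_enum.
Qed.

Lemma color_lt v : col v < ncolors c n D.
Proof. by rewrite /color /ncolors cardE -has_find has_private_block. Qed.

Lemma color_private v e0 :
  private_block (id v) (final v) (nth e0 (enum (block c n D)) (col v)).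
Proof. exact: nth_find (has_private_block v). Qed.

Lemma color_proper u v : adj u v -> col u != col v.
Proof.
move=> adj_uv; apply/eqP => eq_col; have [e0 _] := exists_private_block u.
move: (color_private v e0); rewrite -eq_col.
exact/negP/private_block_adj/color_private.
Qed.

Lemma color_stable t v : T1 <= t <= mis_rounds c n D ->
  color c n D (id v) (H t v) = col v.
Proof.
case/andP => le_T1t le_t; apply: eq_find => e; rewrite /private_block.
congr (_ && ~~ _); apply: eq_existsb => i.
by rewrite (history_take _ _ _ _ v le_t) nth_take // (leq_trans (ltn_ord _) le_T1t).
Qed.

Lemma beeps_phase2 j v : j < ncolors c n D ->
  beeps (T1 + j) v = (col v == j) && ~~ covered c n D j (final v).
Proof.
move=> lt_jm; have le_t : T1 + j <= mis_rounds c n D by rewrite leq_add2l ltnW.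
rewrite /mis_act size_history ltnNge leq_addr /= addKn color_stable ?leq_addr //.
by rewrite /covered (history_take _ _ _ _ v le_t) [T1 + j]addnC -take_drop take_takel.
Qed.

Lemma coveredE j v : j <= ncolors c n D ->
  covered c n D j (final v) = [exists k : 'I_j, nth false (final v) (T1 + k)].
Proof.
move=> le_jm.
have size_drop_final : size (drop T1 (final v)) = ncolors c n D.
  by rewrite size_drop size_history addKn.
apply/(nthP false)/existsP => [[k] | [k heard]].
  rewrite size_takel ?size_drop_final // => lt_kj.
  by rewrite nth_take // nth_drop => heard; exists (Ordinal lt_kj); rewrite heard.
by exists k; rewrite ?size_takel ?size_drop_final // nth_take // nth_drop heard.
Qed.

Lemma in_outputE v : (v \in S) = ~~ covered c n D (col v) (final v).
Proof. by rewrite inE [b_out _ _ _ _ _]/= /mis_out color_lt. Qed.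

Lemma heard_phase2 j v : j < ncolors c n D -> nth false (final v) (T1 + j) =
  ~~ beeps (T1 + j) v && [exists u, adj v u && beeps (T1 + j) u].
Proof.
move=> lt_jm; rewrite nth_history ?ltn_add2l //.
by change (b_act (mis_alg c)) with (mis_act c); case: ifP.
Qed.

Lemma output_beeps u : u \in S -> beeps (T1 + col u) u.
Proof. by rewrite beeps_phase2 ?color_lt // eqxx -in_outputE. Qed.

Lemma output_independent : independent adj S.
Proof.
move=> u v uS vS; apply/negP => adj_uv.
wlog lt_uv : u v uS vS adj_uv / col u < col v.
  move=> hwlog; case: (ltngtP (col u) (col v)) => [lt_uv | lt_vu | eq_uv].
  - exact: hwlog lt_uv.
  - by apply: (hwlog v u) => //; rewrite adj_sym.
  - by case/eqP: (color_proper adj_uv).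
move: vS; rewrite in_outputE coveredE ?(ltnW (color_lt v)) //.
move=> /existsPn /(_ (Ordinal lt_uv)) /negP; apply.
rewrite heard_phase2 ?color_lt // beeps_phase2 ?color_lt // (gtn_eqF lt_uv) andFb andTb.
by apply/existsP; exists u; rewrite adj_sym adj_uv output_beeps.
Qed.

Lemma output_dominating w : w \notin S -> exists2 u, adj w u & u \in S.
Proof.
rewrite in_outputE negbK coveredE ?(ltnW (color_lt w)) // => /existsP [j].
have lt_jm : j < ncolors c n D := ltn_trans (ltn_ord j) (color_lt w).
rewrite heard_phase2 // => /andP [_ /existsP [u /andP [adj_wu]]].
rewrite beeps_phase2 // => /andP [/eqP col_u not_cov].
by exists u; rewrite // in_outputE col_u.
Qed.

Lemma output_is_MIS : is_MIS adj S.
Proof. exact: dominating_independent_is_MIS output_independent output_dominating. Qed.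

End Correctness.

Theorem corollary1 (c : nat) (hc : 1 <= c) :
  exists (A : beep_alg) (C k : nat),
    forall (n Delta : nat) (adj : rel 'I_n) (id : 'I_n -> nat),
      symmetric adj -> irreflexive adj ->
      max_degree adj = Delta ->
      injective id -> (forall v, 1 <= id v <= n ^ c) ->
      b_rounds A n Delta <= C * Delta.+1 ^ 2 * (trunc_log 2 n).+1 ^ k /\
      is_MIS adj (output_set A adj id Delta).
Proof.
exists (mis_alg c), (12 * c ^ 3), 3.
move=> n Delta adj id adj_sym adj_irr maxdeg id_inj id_range.
split; first exact: mis_rounds_bound.
exact: output_is_MIS.
Qed.
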